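(* Let $\mathcal{X}$ be a finite set, $T>0$, $\alpha>0$, $r:\mathcal{X}\to\mathbb{R}$ a reward function, and $Q^{\mathrm{pre}}(t)$, $t\in[0,T]$, a pretrained time-dependent CTMC generator on $\mathcal{X}$. Consider all CTMCs $(x_t)_{t\in[0,T]}$ started from the fixed initial distribution $p_{\lim}$ (a Dirac mass at a single state) and driven by a generator $Q(t)$, and let $Q^{\star}$ maximize, over all such generators (the fully nonparametric/realizable class), the objective $$J(Q)=\mathbb{E}_{x_{0:T}\sim P^{Q}}\big[r(x_T)\big]-\alpha\,\mathbb{E}_{x_{0:T}\sim P^{Q}}\Big[\int_0^T\sum_{y\neq x_t}\Big\{Q^{\mathrm{pre}}_{x_t,y}(t)-Q_{x_t,y}(t)+Q_{x_t,y}(t)\log\frac{Q_{x_t,y}(t)}{Q^{\mathrm{pre}}_{x_t,y}(t)}\Big\}dt\Big].$$ Then the distribution at time $T$ of the CTMC with generator $Q^{\star}$ started from $p_{\lim}$ is proportional to $\exp(r(x)/\alpha)\,p^{\mathrm{pre}}(x)$, where $p^{\mathrm{pre}}$ is the time-$T$ distribution of the CTMC with generator $Q^{\mathrm{pre}}$ started from $p_{\lim}$.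
   Context: A (time-dependent) CTMC generator on a finite set $\mathcal{X}$ is a family of matrices $Q(t)=(Q_{x,y}(t))_{x,y\in\mathcal{X}}$ with $Q_{x,y}(t)\ge 0$ for $x\neq y$ (the transition rate from $x$ to $y$) and $Q_{x,x}(t)=-\sum_{y\neq x}Q_{x,y}(t)$; the marginals $p_t$ satisfy the Kolmogorov forward equation $\frac{d p_t(x)}{dt}=\sum_{y\neq x}Q_{y,x}(t)p_t(y)-\sum_{y\neq x}Q_{x,y}(t)p_t(x)$, i.e. $P(x_{t+dt}=y\mid x_t=x)=\mathbb{1}(x=y)+Q_{x,y}(t)\,dt$. $P^{Q}$ denotes the path law of the CTMC with generator $Q$ on $[0,T]$ started at $p_{\lim}$. The convention $0\log(0/0)=0$ is used, and generators are assumed regular enough (e.g. continuous in $t$) that the forward/backward Kolmogorov equations have unique solutions. The second term of $J$ is the KL divergence between the path measures $P^{Q}$ and $P^{Q^{\mathrm{pre}}}$. *)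

From HB Require Import structures.
From mathcomp Require Import all_boot all_order all_algebra.
From mathcomp Require Import all_classical all_reals all_analysis.
Set Implicit Arguments. Unset Strict Implicit. Unset Printing Implicit Defensive.
Import Order.TTheory GRing.Theory Num.Theory.
Import numFieldNormedType.Exports.
Local Open Scope classical_set_scope.
Local Open Scope ring_scope.

Section CTMC.
Context {R : realType} {X : finType}.

(* A time-dependent rate matrix: Q t x y = Q_{x,y}(t). *)

Definition is_generator (T : R) (Q : R -> X -> X -> R) : Prop :=
  [/\ (forall t x y, x != y -> 0 <= t <= T -> 0 <= Q t x y),
      (forall t x, 0 <= t <= T -> Q t x x = - \sum_(y | y != x) Q t x y) &
      (forall x y, {within `[0, T], continuous (fun t => Q t x y)})].

(* p is the (unique) solution on [0,T] of the Kolmogorov forward equation for Q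
   started at the Dirac mass at x0: p t x = P(x_t = x). *)
Definition kolmogorov_forward (T : R) (Q : R -> X -> X -> R) (x0 : X)
    (p : R -> X -> R) : Prop :=
  [/\ (forall x, p 0 x = (x == x0)%:R),
      (forall x, {within `[0, T], continuous (fun t => p t x)}) &
      (forall x t, 0 < t < T ->
         is_derive t 1 (fun s => p s x)
           (\sum_(y | y != x) Q t y x * p t y - \sum_(y | y != x) Q t x y * p t x))].

(* Pointwise KL rate  b - a + a log(a/b)  (a = Q, b = Q^pre), with the
   conventions 0 log(0/b) = 0 and a log(a/0) = +oo for a > 0. *)
Definition kl_rate (a b : R) : \bar R :=
  if a == 0 then b%:E
  else if b == 0 then +oo%E
  else (b - a + a * ln (a / b))%:E.

Definition running_cost (Qpre Q : R -> X -> X -> R) (p : R -> X -> R) (t : R)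
    : \bar R :=
  (\sum_(x : X) (p t x)%:E *
      \sum_(y | y != x) kl_rate (Q t x y) (Qpre t x y))%E.

(* J(Q) = E[r(x_T)] - alpha * KL(P^Q || P^Qpre), written via the marginals p. *)
Definition objective (T alpha : R) (r : X -> R) (Qpre Q : R -> X -> X -> R)
    (p : R -> X -> R) : \bar R :=
  ((\sum_(x : X) p T x * r x)%:E -
   alpha%:E * \int[@lebesgue_measure R]_(t in `[0%R, T]%classic) running_cost Qpre Q p t)%E.

End CTMC.

(* The optimum is Doob's h-transform of Q^pre.  For a positive terminal
   function c, let h solve the backward Kolmogorov equation dh/dt = - Q^pre h
   on [0, T] with h_T = c; it exists by a monotone Picard iteration once a
   multiple of the identity is added to Q^pre.  Along every CTMC with marginals
   p, sum_x p_t(x) h_t(x) is constant, and the time derivative of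
   sum_x p_t(x) ln h_t(x) is bounded by the KL rate through
   a ln u - b (u - 1) <= b - a + a ln (a / b), with equality when
   Q_xy = Q^pre_xy h_y / h_x.  With c = exp (r / alpha + psi) this yields
   E_{p_T}[r / alpha + psi] - ln Z(psi) <= KL for every admissible Q, where
   Z(psi) = E_{p^pre_T}[exp (r / alpha + psi)], with equality for the
   h-transform when psi = 0.  So the optimal marginal q = p*_T satisfies
   E_q[psi] <= ln E_pi[exp psi] for all psi, pi being the tilted law
   proportional to exp (r / alpha) p^pre_T, and testing psi on single states
   forces q = pi. *)

From HB Require Import structures.
From mathcomp Require Import all_boot all_order all_algebra.
From mathcomp Require Import all_classical all_reals all_analysis.
From mathcomp Require Import ring lra measurable_realfun.
Import Order.TTheory GRing.Theory Num.Theory.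
Import numFieldNormedType.Exports.
Local Open Scope classical_set_scope.
Local Open Scope ring_scope.

Section WithinContinuity.
Context {R : realType}.
Implicit Types (A : set R) (f g : R -> R).

Lemma within_continuousM A f g : {within A, continuous f} ->
  {within A, continuous g} -> {within A, continuous (fun t => f t * g t)}.
Proof. by move=> cf cg x; apply: continuousM; [exact: cf|exact: cg]. Qed.

Lemma within_continuousN A f :
  {within A, continuous f} -> {within A, continuous (fun t => - f t)}.
Proof. by move=> cf x; apply: continuousN; exact: cf. Qed.

Lemma within_continuous_cst A (c : R) : {within A, continuous (fun _ : R => c)}.
Proof. by apply: continuous_subspaceT => x; exact: cvg_cst. Qed.

Lemma within_continuous_sum (I : finType) (P : pred I) A (F : I -> R -> R) :
  (forall i, {within A, continuous (F i)}) ->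
  {within A, continuous (fun t => \sum_(i | P i) F i t)}.
Proof.
move=> cF; rewrite (_ : (fun t => _) = \sum_(i | P i) F i); last first.
  by apply/funext => t; rewrite fct_sumE.
elim/big_rec: _ => [|i G _ cG]; first exact: within_continuous_cst.
exact: within_continuousD.
Qed.

Lemma within_continuousV A f : (forall t, A t -> f t != 0) ->
  {within A, continuous f} -> {within A, continuous (fun t => (f t)^-1)}.
Proof.
move=> f0 cf; rewrite continuous_subspace_in => x /[!inE] Ax.
apply: continuousV; first exact: f0.
by rewrite continuous_subspace_in in cf; apply: cf; rewrite ?inE.
Qed.

End WithinContinuity.

Section Derivatives.
Context {R : realType}.
Implicit Types (f g : R -> R).

Lemma is_derive1_mul {f g} {x df dg : R} :
  is_derive x 1 f df -> is_derive x 1 g dg ->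
  is_derive x 1 (fun t => f t * g t) (df * g x + f x * dg).
Proof.
move=> hf hg; apply: is_derive_eq (is_deriveM hf hg) _.
by rewrite /GRing.scale /= addrC mulrC.
Qed.

Lemma is_derive1_sum {I : finType} {P : pred I} {F : I -> R -> R} {dF : I -> R}
    {x : R} : (forall i, P i -> is_derive x 1 (F i) (dF i)) ->
  is_derive x 1 (fun t => \sum_(i | P i) F i t) (\sum_(i | P i) dF i).
Proof.
move=> hF; rewrite (_ : (fun t => _) = \sum_(i | P i) F i); last first.
  by apply/funext => t; rewrite fct_sumE.
elim/big_rec2: _ => [|i y G Pi hG]; first exact: is_derive_cst.
exact: is_deriveD (hF _ Pi) hG.
Qed.

Lemma is_derive_expR_lin (a b t : R) :
  is_derive t 1 (fun u => expR (a * (b - u))) (- a * expR (a * (b - t))).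
Proof.
have dlin : is_derive t 1 (fun u => a * (b - u)) (- a).
  apply: is_derive_eq (is_deriveZ a (is_deriveB (is_derive_cst b t 1) (is_derive_id t 1))) _.
  by rewrite /GRing.scale /= sub0r mulrN1.
by rewrite mulrC; apply: (is_derive1_comp (is_derive_expR _) dlin).
Qed.

Lemma continuous_expR_lin (A : set R) (a b : R) :
  {within A, continuous (fun u => expR (a * (b - u)))}.
Proof.
apply: continuous_subspaceT => u.
have /(@ex_derive _ _ _ _ _ _ _) /derivable1_diffP := is_derive_expR_lin a b u.
exact: differentiable_continuous.
Qed.
Lemma backward_comparison {u v du dv : R -> R} {a b : R} :
  {within `[a, b], continuous u} -> {within `[a, b], continuous v} ->
  (forall t, a < t < b -> is_derive t 1 u (du t)) ->
  (forall t, a < t < b -> is_derive t 1 v (dv t)) ->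
  (forall t, a < t < b -> dv t <= du t) -> u b <= v b ->
  forall t, a <= t <= b -> u t <= v t.
Proof.
move=> cu cv ud vd dvu uvb t /andP[ta tb]; rewrite -subr_ge0.
have dvu' s : a < s < b -> is_derive s 1 (fun s => v s - u s) (dv s - du s).
  by move=> sab; apply: is_deriveB; [exact: vd|exact: ud].
apply: le_trans (_ : 0 <= v b - u b) _; first by rewrite subr_ge0.
apply: (ler0_derive1_le_cc _ _ (within_continuousB cv cu)) => //;
  rewrite ?in_itv /= ?ta ?tb ?lexx ?(le_trans ta tb) //.
- by move=> s /[!in_itv] /= /dvu' d; exact: (@ex_derive _ _ _ _ _ _ _ d).
- move=> s /[!in_itv] /= sab.
  by rewrite derive1E (@derive_val _ _ _ _ _ _ _ (dvu' s sab)) subr_le0 dvu.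
Qed.

End Derivatives.

Section Primitive.
Context {R : realType}.
Notation mu := (@lebesgue_measure R).

Definition primitive (f : R -> R) (t : R) : R := \int[mu]_(u in `[0, t]) f u.

Lemma continuous_integrable0 (t : R) (f : R -> R) : {within `[0, t], continuous f} ->
  mu.-integrable `[0, t] (EFin \o f).
Proof. by move=> cf; apply: continuous_compact_integrable => //; exact: segment_compact. Qed.

Lemma primitive_continuous (S : R) f : 0 <= S ->
  mu.-integrable `[0, S] (EFin \o f) ->
  {within `[0, S], continuous (primitive f)}.
Proof. exact: parameterized_integral_continuous. Qed.

Lemma primitive_derive (S t : R) f : 0 < t < S -> {within `[0, S], continuous f} ->
  is_derive t 1 (primitive f) (f t).
Proof.
move=> /andP[t0 tS] cf.
have cft : {for t, continuous f}.
  by apply: (within_continuous_continuous (lt_trans t0 tS) cf); rewrite in_itv /= t0.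
have [derivable_F derive_F] := continuous_FTC1_closed tS (continuous_integrable0 _ _ cf) t0 cft.
by apply: DeriveDef => //; rewrite -derive1E.
Qed.

End Primitive.

Section PicardIteration.
Context {R : realType} {X : finType}.
Notation mu := (@lebesgue_measure R).
Variables (S N : R) (B : R -> X -> X -> R) (c : X -> R).
Hypotheses (S_gt0 : 0 < S) (N_ge0 : 0 <= N)
  (B_cont : forall x y, {within `[0, S], continuous (fun t => B t x y)})
  (B_ge0 : forall t x y, 0 <= t <= S -> 0 <= B t x y)
  (B_le : forall t x y, 0 <= t <= S -> B t x y <= N)
  (c_ge0 : forall x, 0 <= c x).

Definition Bmul (k : R -> X -> R) (x : X) (u : R) : R := \sum_y B u x y * k u y.

Definition picard_map (k : R -> X -> R) (x : X) (t : R) : R :=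
  c x + (primitive (Bmul k x) S - primitive (Bmul k x) t).

Fixpoint picard (n : nat) : R -> X -> R :=
  if n is n'.+1 then fun t x => picard_map (picard n') x t else fun _ x => c x.

Local Notation L := (#|X|%:R * N).

(* Gronwall bound for the iterates, since B has row sums at most L. *)
Definition picard_bound (t : R) : R := (\sum_x c x) * expR (L * (S - t)).

Let L_ge0 : 0 <= L. Proof. by rewrite mulr_ge0. Qed.

Let sum_c_ge0 : 0 <= \sum_x c x. Proof. exact: sumr_ge0. Qed.

Lemma Bmul_continuous k x : (forall y, {within `[0, S], continuous (fun t => k t y)}) ->
  {within `[0, S], continuous (Bmul k x)}.
Proof.
move=> ck; apply: within_continuous_sum => y.
by apply: within_continuousM; [exact: B_cont|exact: ck].
Qed.

Lemma Bmul_ge0 k x u : 0 <= u <= S -> (forall y, 0 <= k u y) -> 0 <= Bmul k x u.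
Proof. by move=> uS k0; apply: sumr_ge0 => y _; apply: mulr_ge0; [exact: B_ge0|exact: k0]. Qed.

Lemma Bmul_le k x u w : 0 <= u <= S -> (forall y, 0 <= k u y <= w) ->
  Bmul k x u <= L * w.
Proof.
move=> uS kw; apply: (@le_trans _ _ (\sum_(y : X) N * w)).
  apply: ler_sum => y _; have /andP[k0 k1] := kw y.
  by apply: ler_pM; rewrite ?B_ge0 ?B_le.
by rewrite sumr_const mulr_natl mulrnAl.
Qed.

Lemma Bmul_le_mono k1 k2 x u : 0 <= u <= S -> (forall y, k1 u y <= k2 u y) ->
  Bmul k1 x u <= Bmul k2 x u.
Proof. by move=> uS k12; apply: ler_sum => y _; rewrite ler_wpM2l ?B_ge0. Qed.

Lemma picard_map_continuous k x : mu.-integrable `[0, S] (EFin \o Bmul k x) ->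
  {within `[0, S], continuous (picard_map k x)}.
Proof.
move=> ik; apply: within_continuousD; first exact: within_continuous_cst.
apply: within_continuousB; first exact: within_continuous_cst.
exact: primitive_continuous (ltW S_gt0) ik.
Qed.

Lemma picard_map_derive k x t : 0 < t < S -> {within `[0, S], continuous (Bmul k x)} ->
  is_derive t 1 (picard_map k x) (- Bmul k x t).
Proof.
move=> tS cf; rewrite -[X in is_derive _ _ _ X]add0r -[X in 0 + X]sub0r.
by apply: is_deriveD; apply: is_deriveB; exact: primitive_derive cf.
Qed.

Lemma picard_map_S k x : picard_map k x S = c x.
Proof. by rewrite /picard_map subrr addr0. Qed.

Lemma picard_continuous n x : {within `[0, S], continuous (fun t => picard n t x)}.
Proof.
elim: n x => [|n IH] x /=; first exact: within_continuous_cst.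
by apply/picard_map_continuous/continuous_integrable0/Bmul_continuous.
Qed.

Lemma picard_derive n x t : 0 < t < S ->
  is_derive t 1 (fun u => picard n.+1 u x) (- Bmul (picard n) x t).
Proof.
move=> tS; apply: picard_map_derive => //.
by apply: Bmul_continuous => y; exact: picard_continuous.
Qed.

Lemma picard_S n x : picard n.+1 S x = c x.
Proof. exact: picard_map_S. Qed.

Lemma picard_bound_continuous : {within `[0, S], continuous picard_bound}.
Proof.
apply: within_continuousM; first exact: within_continuous_cst.
exact: continuous_expR_lin.
Qed.

Lemma picard_bound_derive (t : R) : is_derive t 1 picard_bound (- L * picard_bound t).
Proof.
apply: is_derive_eq (is_derive1_mul (is_derive_cst (\sum_x c x) t 1) (is_derive_expR_lin L S t)) _.
by rewrite /picard_bound /cst; ring.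
Qed.

Lemma sum_c_le_picard_bound x t : t <= S -> c x <= picard_bound t.
Proof.
move=> tS; apply: (@le_trans _ _ (\sum_x c x)).
  by rewrite (bigD1 x) //= lerDl; apply: sumr_ge0.
rewrite -{1}(mulr1 (\sum_x c x)) ler_wpM2l ?sum_c_ge0 //.
by apply: le_trans (expR_ge1Dx _); rewrite lerDl mulr_ge0 ?L_ge0 ?subr_ge0.
Qed.

Lemma picard_bound_le0 t : 0 <= t -> picard_bound t <= picard_bound 0.
Proof.
move=> t0; rewrite ler_wpM2l ?sum_c_ge0 // ler_expR ler_wpM2l ?L_ge0 //.
by rewrite lerD2l lerN2.
Qed.

Lemma picard_bounds n t x : 0 <= t <= S -> c x <= picard n t x <= picard_bound t.
Proof.
elim: n t x => [|n IH] t x tS.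
  by rewrite lexx sum_c_le_picard_bound //; case/andP: tS.
have itv u : 0 < u < S -> 0 <= u <= S by case/andP=> u0 uS; rewrite !ltW.
have k_ge0 u y : 0 < u < S -> 0 <= picard n u y.
  by move=> /itv/(IH u y)/andP[+ _]; exact: le_trans.
apply/andP; split.
- apply: (backward_comparison (within_continuous_cst _ _) (picard_continuous n.+1 x)
    (fun u _ => is_derive_cst (c x) u 1) (fun u uS => picard_derive n x u uS)) tS.
  + move=> u uS; rewrite oppr_le0; apply: Bmul_ge0 => [|y]; [exact: itv|exact: k_ge0].
  + by rewrite picard_S.
- apply: (backward_comparison (picard_continuous n.+1 x) picard_bound_continuous
    (fun u uS => picard_derive n x u uS) (fun u _ => picard_bound_derive u)) tS.
  + move=> u uS; rewrite mulNr lerN2; apply: Bmul_le => [|y]; first exact: itv.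
    by rewrite k_ge0 //; case/andP: (IH u y (itv u uS)).
  + by rewrite picard_S sum_c_le_picard_bound.
Qed.

Lemma picard_ge0 n t x : 0 <= t <= S -> 0 <= picard n t x.
Proof. by move=> /(picard_bounds n t x) /andP[+ _]; exact: le_trans. Qed.

Lemma picard_nondecreasing n t x : 0 <= t <= S -> picard n t x <= picard n.+1 t x.
Proof.
elim: n t x => [|n IH] t x tS; first by case/andP: (picard_bounds 1 t x tS).
apply: (backward_comparison (picard_continuous n.+1 x) (picard_continuous n.+2 x)
  (fun u uS => picard_derive n x u uS) (fun u uS => picard_derive n.+1 x u uS)) tS.
- move=> u /andP[u0 uS]; rewrite lerN2.
  by apply: Bmul_le_mono => [|y]; [rewrite !ltW|apply: IH; rewrite !ltW].
- by rewrite !picard_S.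
Qed.

Definition picard_lim (t : R) (x : X) : R := limn (fun n => picard n t x).

Lemma picard_cvg t x : 0 <= t <= S -> picard n t x @[n --> \oo] --> picard_lim t x.
Proof.
move=> tS; apply: nondecreasing_is_cvgn.
  by apply/nondecreasing_seqP => n; exact: picard_nondecreasing.
by exists (picard_bound t) => _ [n _ <-]; case/andP: (picard_bounds n t x tS).
Qed.

Lemma picard_le_lim n t x : 0 <= t <= S -> picard n t x <= picard_lim t x.
Proof.
move=> tS; apply: (nondecreasing_cvgn_le (u_ := fun n => picard n t x)).
  by apply/nondecreasing_seqP => m; exact: picard_nondecreasing.
exact: picard_cvg.
Qed.

Lemma Bmul_picard_cvg x u : 0 <= u <= S ->
  Bmul (picard n) x u @[n --> \oo] --> Bmul picard_lim x u.
Proof.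
move=> uS; rewrite /Bmul; apply: (@cvg_big _ _ +%R 0 _ add_continuous) => y _.
by apply: cvgMl_tmp; exact: picard_cvg.
Qed.

Lemma Bmul_picard_bounds n x u : 0 <= u <= S ->
  0 <= Bmul (picard n) x u <= L * picard_bound 0.
Proof.
move=> uS; rewrite Bmul_ge0 //=; last by move=> y; exact: picard_ge0.
apply: le_trans (Bmul_le (picard n) x u (picard_bound u) uS _) _.
  by move=> y; rewrite picard_ge0 //=; case/andP: (picard_bounds n u y uS).
by rewrite ler_wpM2l ?L_ge0 // picard_bound_le0 //; case/andP: uS.
Qed.

Lemma Bmul_picard_lim_measurable x : measurable_fun `[0, S] (Bmul picard_lim x).
Proof.
apply: (measurable_fun_cvg (h := fun n => Bmul (picard n) x)).
  move=> n; apply: subspace_continuous_measurable_fun => //.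
  by apply: Bmul_continuous => y; exact: picard_continuous.
by move=> u; rewrite /= in_itv /= => uS; exact: Bmul_picard_cvg.
Qed.

Lemma primitive_Bmul_picard_cvg t x : 0 <= t <= S ->
  mu.-integrable `[0, t] (EFin \o Bmul picard_lim x) /\
  primitive (Bmul (picard n) x) t @[n --> \oo] --> primitive (Bmul picard_lim x) t.
Proof.
move=> /andP[t0 tS].
have sub : `[0, t] `<=` `[0, S].
  by move=> u /=; rewrite !in_itv /= => /andP[-> /le_trans]; apply.
have inS u : u \in `[0, t] -> 0 <= u <= S.
  by rewrite in_itv /= => /andP[-> /le_trans]; apply.
have mt : measurable (`[0, t] : set (measurableTypeR R)) by exact: measurable_itv.
have mfn n : measurable_fun (T := measurableTypeR R) `[0, t] (EFin \o Bmul (picard n) x).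
  apply/measurable_EFinP; apply: measurable_funS (sub) _ => //.
  apply: subspace_continuous_measurable_fun => //.
  by apply: Bmul_continuous => y; exact: picard_continuous.
have mf : measurable_fun (T := measurableTypeR R) `[0, t] (EFin \o Bmul picard_lim x).
  apply/measurable_EFinP; apply: measurable_funS (sub) _ => //.
  exact: Bmul_picard_lim_measurable.
have ig : mu.-integrable `[0, t] (EFin \o cst (L * picard_bound 0)).
  by apply: continuous_integrable0; exact: within_continuous_cst.
have pointwise : \forall u \ae mu, `[0, t]%classic u ->
    (EFin \o Bmul (picard n) x) u @[n --> \oo] --> (EFin \o Bmul picard_lim x) u.
  apply: aeW => u tu /=; apply/fine_cvgP; split; first exact: nearW.
  exact: Bmul_picard_cvg (inS u tu).
have dominated : \forall u \ae mu, forall n, `[0, t]%classic u ->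
    (`|(EFin \o Bmul (picard n) x) u| <= (EFin \o cst (L * picard_bound 0)%R) u)%E.
  apply: aeW => u n tu /=; rewrite lee_fin.
  by case/andP: (Bmul_picard_bounds n x u (inS u tu)) => ? ?; rewrite ger0_norm.
have [ilim _ cv] := dominated_convergence mt mfn mf pointwise ig dominated.
split => //; move: cv; rewrite -(fineK (integrable_fin_num mt ilim)).
by move=> /fine_cvgP[_].
Qed.

Lemma picard_lim_fixed t x : 0 <= t <= S -> picard_lim t x = picard_map picard_lim x t.
Proof.
move=> tS; have SS : 0 <= S <= S by rewrite lexx ltW.
have shifted : picard n.+1 t x @[n --> \oo] --> picard_lim t x.
  by have := picard_cvg t x tS; rewrite -cvg_shiftS.
have iterated : picard n.+1 t x @[n --> \oo] --> picard_map picard_lim x t.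
  apply: cvgD; first exact: cvg_cst.
  by apply: cvgB; [exact: (primitive_Bmul_picard_cvg S x SS).2|
                   exact: (primitive_Bmul_picard_cvg t x tS).2].
by rewrite -(cvg_lim (@Rhausdorff R) shifted) (cvg_lim (@Rhausdorff R) iterated).
Qed.

(* [picard_lim] is only known to be a fixed point on [0, S]; [picard_sol] is the
   continuous function that agrees with it there. *)
Definition picard_sol (t : R) (x : X) : R := picard_map picard_lim x t.

Lemma picard_sol_continuous x : {within `[0, S], continuous (fun t => picard_sol t x)}.
Proof.
apply: picard_map_continuous; apply: (primitive_Bmul_picard_cvg S x _).1.
by rewrite lexx ltW.
Qed.

Lemma primitive_Bmul_picard_sol t x : 0 <= t <= S ->
  primitive (Bmul picard_sol x) t = primitive (Bmul picard_lim x) t.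
Proof.
move=> /andP[t0 tS]; apply: eq_Rintegral => u; rewrite inE /= in_itv /= => /andP[u0 ut].
apply: eq_bigr => y _; rewrite /picard_sol -picard_lim_fixed //.
by rewrite u0 (le_trans ut tS).
Qed.

Lemma picard_sol_derive x t : 0 < t < S ->
  is_derive t 1 (fun u => picard_sol u x) (- Bmul picard_sol x t).
Proof.
move=> tS; apply: (near_eq_is_derive _ (picard_map_derive _ _ _ tS _)).
  have : t \in `]0, S[ by rewrite in_itv.
  move=> /near_in_itvoo; apply: filterS => u /[!in_itv] /= /andP[u0 uS].
  have uS' : 0 <= u <= S by rewrite !ltW.
  have SS : 0 <= S <= S by rewrite lexx ltW.
  by rewrite /picard_map !primitive_Bmul_picard_sol.
by apply: Bmul_continuous => y; exact: picard_sol_continuous.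
Qed.

Lemma picard_sol_ge t x : 0 <= t <= S -> c x <= picard_sol t x.
Proof. by move=> tS; rewrite /picard_sol -picard_lim_fixed //; exact: (picard_le_lim 0). Qed.

Lemma nonneg_backward_ode_exists : exists k : R -> X -> R,
  [/\ forall x, {within `[0, S], continuous (fun t => k t x)},
      forall x t, 0 < t < S -> is_derive t 1 (fun u => k u x) (- Bmul k x t),
      forall x, k S x = c x &
      forall t x, 0 <= t <= S -> c x <= k t x].
Proof.
exists picard_sol; split.
- exact: picard_sol_continuous.
- exact: picard_sol_derive.
- by move=> x; rewrite /picard_sol picard_map_S.
- exact: picard_sol_ge.
Qed.

End PicardIteration.

Section BackwardEquation.
Context {R : realType} {X : finType}.
Implicit Types (S T : R) (A Q : R -> X -> X -> R).

Definition kolmogorov_backward S A (h : R -> X -> R) : Prop :=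
  (forall x, {within `[0, S], continuous (fun t => h t x)}) /\
  (forall x t, 0 < t < S -> is_derive t 1 (fun u => h u x)
     (- \sum_(y | y != x) A t x y * (h t y - h t x))).

Lemma is_generator_le {T S Q} : S <= T -> is_generator T Q -> is_generator S Q.
Proof.
move=> ST [Q0 Qd Qc]; have sub t : 0 <= t <= S -> 0 <= t <= T.
  by case/andP=> -> /le_trans; apply.
split => [t x y xy /sub|t x /sub|x y]; [exact: Q0|exact: Qd|].
apply: continuous_subspaceW (Qc x y) => t /=; rewrite !in_itv /=.
by case/andP=> -> /le_trans; apply.
Qed.

Lemma generator_diag_le0 {S A t} x : is_generator S A -> 0 <= t <= S -> A t x x <= 0.
Proof.
move=> [A0 Ad _] tS; rewrite Ad // oppr_le0; apply: sumr_ge0 => y yx.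
by apply: A0; rewrite // eq_sym.
Qed.

Lemma generator_sum_mul {S A t} x (k : X -> R) : is_generator S A -> 0 <= t <= S ->
  \sum_y A t x y * k y = \sum_(y | y != x) A t x y * (k y - k x).
Proof.
move=> [_ Ad _] tS; rewrite (bigD1 x) //= Ad // mulNr mulr_suml.
by rewrite addrC -sumrB; apply: eq_bigr => y _; rewrite mulrBr.
Qed.

Lemma continuous_family_bounded (I : finType) S (F : I -> R -> R) : 0 <= S ->
  (forall i, {within `[0, S], continuous (F i)}) ->
  exists M, 0 <= M /\ forall i t, 0 <= t <= S -> `|F i t| <= M.
Proof.
move=> S0 Fc.
have /fin_all_exists[tmax htmax] i : exists tm : R, forall t, 0 <= t <= S ->
    `|F i t| <= `|F i tm|.
  have cn : {within `[0, S], continuous (fun t => `|F i t|)}.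
    apply: (@within_continuous_comp _ _ _ _ (F i) (fun u : R => `|u|)) => // u _.
    exact: norm_continuous.
  have [tm _ tmax] := EVT_max S0 cn.
  by exists tm => t tS; apply: tmax; rewrite in_itv.
exists (\sum_i `|F i (tmax i)|); split; first exact: sumr_ge0.
move=> i t tS; apply: le_trans (htmax i t tS) _.
by rewrite (bigD1 i) //= lerDl sumr_ge0.
Qed.

Lemma uniformization_bounds {S A M} t x y : is_generator S A ->
  (forall t x y, 0 <= t <= S -> `|A t x y| <= M) -> 0 <= t <= S ->
  0 <= (x == y)%:R * M + A t x y <= M.
Proof.
move=> gA AM tS; have [A0 _ _] := gA; apply/andP; split; case: eqVneq => [<-|xy].
- by rewrite mul1r -lerBlDl sub0r lerNl; have /ler_normlP[] := AM t x x tS.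
- by rewrite mul0r add0r A0.
- by rewrite mul1r gerDl (generator_diag_le0 _ gA).
- by rewrite mul0r add0r (le_trans (ler_norm _) (AM t x y tS)).
Qed.

Lemma uniformization_sum_mul {S A t} M x (k : X -> R) : is_generator S A -> 0 <= t <= S ->
  \sum_y ((x == y)%:R * M + A t x y) * k y =
    M * k x + \sum_(y | y != x) A t x y * (k y - k x).
Proof.
move=> gA tS; rewrite -(generator_sum_mul _ k gA tS).
under eq_bigr do rewrite mulrDl.
rewrite big_split /= (bigD1 x) //= eqxx big1 ?addr0 ?mul1r // => y yx.
by rewrite eq_sym (negbTE yx) !mul0r.
Qed.

Lemma kolmogorov_backward_exists {S A} (c : X -> R) :
  0 < S -> is_generator S A -> (forall x, 0 <= c x) ->
  exists h, [/\ kolmogorov_backward S A h, forall x, h S x = c x,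
    forall t x, 0 <= t <= S -> 0 <= h t x &
    forall t x, 0 <= t <= S -> 0 < c x -> 0 < h t x].
Proof.
move=> S0 gA c0; have [_ _ Ac] := gA.
have [M [M0 AM]] := @continuous_family_bounded (X * X)%type S (fun p t => A t p.1 p.2)
  (ltW S0) (fun p => Ac p.1 p.2).
(* h := exp (- M (S - t)) k solves the equation for A iff k' = - (M + A) k,
   and M + A has entries in [0, M]. *)
pose B t x y := (x == y)%:R * M + A t x y.
have Bc x y : {within `[0, S], continuous (fun t => B t x y)}.
  by apply: within_continuousD; [exact: within_continuous_cst|exact: Ac].
have AM' t x y : 0 <= t <= S -> `|A t x y| <= M by exact: AM (x, y) t.
have B0 t x y tS := proj1 (andP (uniformization_bounds t x y gA AM' tS)).
have BM t x y tS := proj2 (andP (uniformization_bounds t x y gA AM' tS)).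
have [k [kc kd kS kge]] := nonneg_backward_ode_exists _ _ _ _ S0 M0 Bc B0 BM c0.
pose e t := expR (- M * (S - t)).
exists (fun t x => e t * k t x); split.
- split => [x|x t tS]; first by apply: within_continuousM => //; exact: continuous_expR_lin.
  have tS' : 0 <= t <= S by case/andP: tS => ? ?; rewrite !ltW.
  apply: is_derive_eq (is_derive1_mul (is_derive_expR_lin _ _ t) (kd x t tS)) _.
  rewrite /Bmul /B (uniformization_sum_mul _ _ (k t) gA tS').
  rewrite [in RHS](eq_bigr (fun y => e t * (A t x y * (k t y - k t x)))) -?mulr_sumr.
    by rewrite /e; ring.
  by move=> y _; rewrite -mulrBr mulrCA.
- by move=> x; rewrite /e subrr mulr0 expR0 mul1r kS.
- by move=> t x tS; rewrite mulr_ge0 ?expR_ge0 // (le_trans (c0 x) (kge t x tS)).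
- by move=> t x tS cx; rewrite mulr_gt0 ?expR_gt0 // (lt_le_trans cx (kge t x tS)).
Qed.

End BackwardEquation.

Lemma exchange_big_neq {R : realType} {X : finType} (F : X -> X -> R) :
  \sum_x \sum_(y | y != x) F x y = \sum_y \sum_(x | x != y) F x y.
Proof.
rewrite (exchange_big_dep xpredT) //=; apply: eq_bigr => y _.
by apply: eq_bigl => x; rewrite eq_sym.
Qed.

Lemma sum_dirac {R : realType} {X : finType} (x0 : X) (f : X -> R) :
  \sum_x (x == x0)%:R * f x = f x0.
Proof.
rewrite (bigD1 x0) //= eqxx mul1r big1 ?addr0 // => x xx0.
by rewrite (negbTE xx0) mul0r.
Qed.

Section Duality.
Context {R : realType} {X : finType}.
Context {T : R} {Q : R -> X -> X -> R} {x0 : X} {p : R -> X -> R}.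
Hypotheses (gQ : is_generator T Q) (kf : kolmogorov_forward T Q x0 p).

Lemma kolmogorov_duality s (h : R -> X -> R) : 0 < s <= T -> kolmogorov_backward s Q h ->
  \sum_x p s x * h s x = h 0 x0.
Proof.
move=> /andP[s0 sT] [hc hd]; have [p0 pc pd] := kf.
pose G t := \sum_x p t x * h t x.
have Gc : {within `[0, s], continuous G}.
  apply: within_continuous_sum => x; apply: within_continuousM => //.
  apply: continuous_subspaceW (pc x) => t /=; rewrite !in_itv /=.
  by case/andP=> -> /le_trans; apply.
have Gd t : t \in `]0, s[ -> is_derive t 1 G 0.
  rewrite in_itv /= => /andP[t0 ts].
  have tT : 0 < t < T by rewrite t0 (lt_le_trans ts sT).
  apply: is_derive_eq (is_derive1_sum (fun x _ => is_derive1_mul (pd x t tT) (hd x t _))) _.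
    by rewrite t0.
  rewrite (eq_bigr (fun x => \sum_(y | y != x) Q t y x * p t y * h t x -
      \sum_(y | y != x) Q t x y * p t x * h t y)); last first.
    move=> x _; rewrite mulrBl !mulr_suml mulrN mulr_sumr.
    by rewrite -!sumrN -!big_split /=; apply: eq_bigr => y _; ring.
  by rewrite sumrB (exchange_big_neq (fun x y => Q t y x * p t y * h t x)) subrr.
have [c _ ] := MVT s0 Gd Gc.
rewrite mul0r => /eqP; rewrite subr_eq0 => /eqP.
rewrite {1}/G => ->; rewrite /G.
under eq_bigr do rewrite p0.
exact: sum_dirac.
Qed.

Lemma kolmogorov_forward_mass {s} : 0 <= s <= T -> \sum_x p s x = 1.
Proof.
have [p0 _ _] := kf; move=> /andP[s0 sT].
have [<-|s0'] := eqVneq 0 s.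
  by under eq_bigr do rewrite p0 -[_%:R]mulr1; exact: sum_dirac.
have bw : kolmogorov_backward s Q (fun _ _ => 1).
  split => [x|x t _]; first exact: within_continuous_cst.
  rewrite big1 => [|y _]; last by rewrite subrr mulr0.
  by rewrite oppr0; exact: is_derive_cst.
have := kolmogorov_duality s (fun _ _ => 1); rewrite lt_neqAle s0' s0 sT => /(_ isT bw).
by under eq_bigr do rewrite mulr1.
Qed.

Lemma kolmogorov_forward_ge0 s x : 0 <= s <= T -> 0 <= p s x.
Proof.
have [p0 _ _] := kf; move=> /andP[s0 sT].
have [<-|s0'] := eqVneq 0 s; first by rewrite p0 ler0n.
have spos : 0 < s by rewrite lt_neqAle s0' s0.
have [h [bw hS h0 _]] := kolmogorov_backward_exists (fun y => (y == x)%:R) spos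
  (is_generator_le sT gQ) (fun y => ler0n _ _).
have := kolmogorov_duality s h; rewrite spos sT => /(_ isT bw).
under eq_bigr do rewrite hS mulrC; rewrite sum_dirac => ->.
by apply: h0; rewrite lexx ltW.
Qed.

End Duality.

Section KLRate.
Context {R : realType}.
Local Open Scope ereal_scope.

Lemma ln_le_subr1 (z : R) : (0 < z)%R -> (ln z <= z - 1)%R.
Proof. by move=> z0; have := @le_ln1Dx R (z - 1); rewrite subrKC; apply; rewrite ltrBrDl subrr. Qed.

Lemma kl_rate_ge {a b u : R} : (0 <= a)%R -> (0 <= b)%R -> (0 < u)%R ->
  (a * ln u - b * (u - 1))%:E <= kl_rate a b.
Proof.
move=> a0 b0 u0; rewrite /kl_rate.
have [->|a_neq0] := eqVneq a 0%R.
  by rewrite lee_fin mul0r sub0r mulrBr mulr1 opprB lerBlDr lerDl mulr_ge0 // ltW.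
have [->|b_neq0] := eqVneq b 0%R; first exact: leey.
have ap : (0 < a)%R by rewrite lt_neqAle eq_sym a_neq0.
have bp : (0 < b)%R by rewrite lt_neqAle eq_sym b_neq0.
have := @ln_le_subr1 (u * b / a); rewrite divr_gt0 ?mulr_gt0 // => /(_ isT).
rewrite !lnM ?posrE ?mulr_gt0 ?invr_gt0 // !lnV ?posrE // => h.
rewrite lee_fin; have := ler_wpM2l a0 h.
have -> : (a * (u * b / a - 1) = u * b - a)%R by field; rewrite gt_eqF.
by rewrite !mulrDr; lra.
Qed.

Lemma kl_rate_eq (b u : R) : (0 <= b)%R -> (0 < u)%R ->
  (b * u * ln u - b * (u - 1))%:E = kl_rate (b * u) b.
Proof.
move=> b0 u0; rewrite /kl_rate.
have [->|b_neq0] := eqVneq b 0%R; first by rewrite !mul0r eqxx subrr.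
rewrite mulf_eq0 (negbTE b_neq0) gt_eqF //= (mulrC b u) mulfK //.
by congr EFin; ring.
Qed.

Lemma kl_rate_ge0 (a b : R) : (0 <= a)%R -> (0 <= b)%R -> 0 <= kl_rate a b.
Proof.
move=> a0 b0; apply: le_trans (kl_rate_ge a0 b0 ltr01).
by rewrite ln1 mulr0 subrr mulr0 subrr.
Qed.

End KLRate.

(* No measurability is needed: the integral of a nonnegative function is a
   supremum over its simple minorants. *)
Lemma ge0_le_integral_nonmeas d (T : measurableType d) (R : realType)
    (mu : {measure set T -> \bar R}) (D : set T) (f1 f2 : T -> \bar R) :
  (forall x, D x -> 0 <= f1 x)%E -> (forall x, D x -> f1 x <= f2 x)%E ->
  (\int[mu]_(x in D) f1 x <= \int[mu]_(x in D) f2 x)%E.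
Proof.
move=> f10 f12.
have f20 x : D x -> (0 <= f2 x)%E by move=> Dx; exact: le_trans (f10 _ Dx) (f12 _ Dx).
rewrite (ge0_integralE mu f10) (ge0_integralE mu f20).
apply: ereal_sup_le => _ [h /= hf1 <-]; exists h => //= x.
apply: le_trans (hf1 x) _; rewrite /patch; case: ifPn => // /[!inE].
exact: f12.
Qed.

Definition log_potential {R : realType} {X : finType} (p h : R -> X -> R) (t : R) : R :=
  \sum_x p t x * ln (h t x).

Definition log_potential_rate {R : realType} {X : finType} (Qpre Q : R -> X -> X -> R)
    (p h : R -> X -> R) (t : R) : R :=
  \sum_x p t x * \sum_(y | y != x)
    (Q t x y * ln (h t y / h t x) - Qpre t x y * (h t y / h t x - 1)).

Section LogPotential.
Context {R : realType} {X : finType}.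
Notation mu := (@lebesgue_measure R).
Context {T : R} {Qpre Q : R -> X -> X -> R} {x0 : X} {p h : R -> X -> R}.
Hypotheses (T_gt0 : 0 < T) (gpre : is_generator T Qpre) (gQ : is_generator T Q)
  (kf : kolmogorov_forward T Q x0 p) (bw : kolmogorov_backward T Qpre h)
  (h_gt0 : forall t x, 0 <= t <= T -> 0 < h t x).

Let T_itv t : [set` `[0, T]] t -> 0 <= t <= T.
Proof. by rewrite /= in_itv. Qed.

Let ln_h_ratio t x y : 0 <= t <= T -> ln (h t y / h t x) = ln (h t y) - ln (h t x).
Proof. by move=> tT; rewrite lnM ?posrE ?invr_gt0 ?h_gt0 // lnV ?posrE ?h_gt0. Qed.

Let h_continuous x : {within `[0, T], continuous (fun t => h t x)}.
Proof. by case: bw. Qed.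

Let hV_continuous x : {within `[0, T], continuous (fun t => (h t x)^-1)}.
Proof.
by apply: within_continuousV => // t /T_itv tT; rewrite gt_eqF ?h_gt0.
Qed.

Let ln_h_continuous x : {within `[0, T], continuous (fun t => ln (h t x))}.
Proof.
apply: (@within_continuous_comp _ _ _ _ (fun t => h t x) (@ln R)) => //.
by move=> u; rewrite inE => -[t tT <-]; apply/continuous_ln/h_gt0; exact: T_itv.
Qed.

Lemma log_potential_rate_continuous :
  {within `[0, T], continuous (log_potential_rate Qpre Q p h)}.
Proof.
have [_ pc _] := kf; have [_ _ Qc] := gQ; have [_ _ Qprec] := gpre.
apply: within_continuous_sum => x; apply: within_continuousM => //.
apply: within_continuous_sum => y; apply: within_continuousB; apply: within_continuousM => //.
- apply: (@within_continuous_comp _ _ _ _ (fun t => h t y / h t x) (@ln R)).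
    move=> u; rewrite inE => -[t /T_itv tT <-].
    by apply/continuous_ln/divr_gt0; exact: h_gt0.
  exact: within_continuousM.
- apply: within_continuousB; last exact: within_continuous_cst.
  exact: within_continuousM.
Qed.

Lemma log_potential_derive t : 0 < t < T ->
  is_derive t 1 (log_potential p h) (log_potential_rate Qpre Q p h t).
Proof.
move=> tT; have tT' : 0 <= t <= T by case/andP: tT => ? ?; rewrite !ltW.
have [_ _ pd] := kf; have [_ hd] := bw.
have dlnh x : is_derive t 1 (fun u => ln (h u x))
    ((h t x)^-1 * - \sum_(y | y != x) Qpre t x y * (h t y - h t x)).
  by apply: is_derive1_comp; [exact/is_derive1_ln/h_gt0|exact: hd].
apply: is_derive_eq (is_derive1_sum (fun x _ => is_derive1_mul (pd x t tT) (dlnh x))) _.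
pose rest x y := - (Q t x y * p t x * ln (h t x)) - p t x * (Qpre t x y * (h t y / h t x - 1)).
have lhsE x : (\sum_(y | y != x) Q t y x * p t y - \sum_(y | y != x) Q t x y * p t x) *
      ln (h t x) + p t x * ((h t x)^-1 * - \sum_(y | y != x) Qpre t x y * (h t y - h t x)) =
    \sum_(y | y != x) Q t y x * p t y * ln (h t x) + \sum_(y | y != x) rest x y.
  rewrite /rest mulrBl !mulr_suml -!sumrN !mulr_sumr -!big_split /=.
  by apply: eq_bigr => y _; field; rewrite gt_eqF ?h_gt0.
have rhsE x : p t x * \sum_(y | y != x)
      (Q t x y * ln (h t y / h t x) - Qpre t x y * (h t y / h t x - 1)) =
    \sum_(y | y != x) Q t x y * p t x * ln (h t y) + \sum_(y | y != x) rest x y.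
  by rewrite /rest mulr_sumr -big_split /=; apply: eq_bigr => y _; rewrite ln_h_ratio //; ring.
rewrite (eq_bigr _ (fun x _ => lhsE x)) /log_potential_rate (eq_bigr _ (fun x _ => rhsE x)).
by rewrite !big_split /= (exchange_big_neq (fun x y => Q t y x * p t y * ln (h t x))).
Qed.

Lemma integral_log_potential_rate :
  (\int[mu]_(t in `[0%R, T]) (log_potential_rate Qpre Q p h t)%:E =
    (log_potential p h T - log_potential p h 0)%:E)%E.
Proof.
have lpc : {within `[0, T], continuous (log_potential p h)}.
  have [_ pc _] := kf.
  by apply: within_continuous_sum => x; exact: within_continuousM.
rewrite EFinB; apply: continuous_FTC2 T_gt0 log_potential_rate_continuous _ _.
  have [_ l0 lT] := (continuous_within_itvP _ T_gt0).1 lpc.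
  split => // t; rewrite in_itv /= => tT.
  exact: (@ex_derive _ _ _ _ _ _ _ (log_potential_derive t tT)).
move=> t; rewrite in_itv /= => tT.
by rewrite derive1E (@derive_val _ _ _ _ _ _ _ (log_potential_derive t tT)).
Qed.

Lemma log_potential_rate_le_cost t : 0 <= t <= T ->
  ((log_potential_rate Qpre Q p h t)%:E <= running_cost Qpre Q p t)%E.
Proof.
move=> tT; have [Q0 _ _] := gQ; have [P0 _ _] := gpre.
rewrite /log_potential_rate /running_cost -sumEFin.
apply: lee_sum => x _; rewrite EFinM; apply: lee_wpmul2l.
  by rewrite lee_fin (kolmogorov_forward_ge0 gQ kf).
rewrite -sumEFin; apply: lee_sum => y yx.
by apply: kl_rate_ge; rewrite ?Q0 ?P0 ?divr_gt0 ?h_gt0 // eq_sym.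
Qed.

Lemma running_cost_ge0 t : 0 <= t <= T -> (0 <= running_cost Qpre Q p t)%E.
Proof.
move=> tT; have [Q0 _ _] := gQ; have [P0 _ _] := gpre.
apply: sume_ge0 => x _; apply: mule_ge0; first by rewrite lee_fin (kolmogorov_forward_ge0 gQ kf).
by apply: sume_ge0 => y yx; apply: kl_rate_ge0; rewrite ?Q0 ?P0 // eq_sym.
Qed.

Lemma log_potential_le_cost :
  ((log_potential p h T - log_potential p h 0)%:E <=
    \int[mu]_(t in `[0%R, T]) running_cost Qpre Q p t)%E.
Proof.
rewrite -integral_log_potential_rate integralE.
apply: (@le_trans _ _ (\int[mu]_(t in `[0%R, T]) ((EFin \o log_potential_rate Qpre Q p h)^\+ t))%E).
  rewrite -[leRHS]adde0; apply: leeD2l; rewrite oppe_le0.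
  by apply: integral_ge0 => t _; exact: funeneg_ge0.
apply: ge0_le_integral_nonmeas => t /T_itv tT; first exact: funepos_ge0.
by rewrite funeposE ge_max log_potential_rate_le_cost // running_cost_ge0.
Qed.

Lemma log_potential_eq_cost : (forall t x y, 0 <= t <= T -> x != y ->
    Q t x y = Qpre t x y * (h t y / h t x)) ->
  (\int[mu]_(t in `[0%R, T]) running_cost Qpre Q p t =
    (log_potential p h T - log_potential p h 0)%:E)%E.
Proof.
move=> Qh; rewrite -integral_log_potential_rate; apply: eq_integral => t /[1!inE] /T_itv tT.
rewrite /log_potential_rate /running_cost -sumEFin; apply: eq_bigr => x _.
rewrite EFinM -sumEFin; congr (_ * _)%E; apply: eq_bigr => y yx.
have [P0 _ _] := gpre; rewrite Qh 1?eq_sym // -kl_rate_eq ?P0 ?divr_gt0 ?h_gt0 //.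
by rewrite eq_sym.
Qed.

End LogPotential.

Lemma gibbs_variational_eq {R : realType} {X : finType} (q pi : X -> R) :
  (forall x, 0 <= pi x) -> \sum_x pi x = 1 -> \sum_x q x = 1 ->
  (forall psi : X -> R, \sum_x q x * psi x <= ln (\sum_x pi x * expR (psi x))) ->
  q =1 pi.
Proof.
move=> pi_ge0 pi1 q1 variational.
(* Testing psi = ln (1 + d) on the single state y gives q y <= pi y (1 + d). *)
have q_le y : q y <= pi y.
  apply/ler_addgt0Pr => e e0; have [q_le0|q_gt0] := lerP (q y) 0.
    by apply: le_trans q_le0 _; rewrite addr_ge0 ?pi_ge0 ?ltW.
  pose d := e / (pi y + 1).
  have pi1_gt0 : 0 < pi y + 1 by rewrite ltr_wpDl.
  have d_gt0 : 0 < d by rewrite divr_gt0.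
  have ln1D_ge : d / (1 + d) <= ln (1 + d).
    have := @ln_le_subr1 _ (1 + d)^-1; rewrite invr_gt0 addr_gt0 // lnV ?posrE ?addr_gt0 //.
    move=> /(_ isT); rewrite lerNl opprB.
    by have -> : 1 - (1 + d)^-1 = d / (1 + d) by field; rewrite gt_eqF ?addr_gt0.
  pose psi z := if z == y then ln (1 + d) else 0.
  have lhsE : \sum_z q z * psi z = q y * ln (1 + d).
    rewrite (bigD1 y) //= /psi eqxx big1 ?addr0 // => z zy.
    by rewrite (negbTE zy) mulr0.
  have rhsE : \sum_z pi z * expR (psi z) = 1 + pi y * d.
    rewrite -pi1 (bigD1 y) // [in RHS](bigD1 y) //= /psi eqxx lnK ?posrE ?addr_gt0 //.
    rewrite (eq_bigr pi) => [|z zy]; last by rewrite (negbTE zy) expR0 mulr1.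
    by ring.
  have := variational psi; rewrite lhsE rhsE => /le_trans /(_ (le_ln1Dx _)).
  rewrite (lt_le_trans _ (mulr_ge0 (pi_ge0 y) (ltW d_gt0))) ?ltrN10 // => /(_ isT) ineq.
  have : q y * (d / (1 + d)) <= pi y * d := le_trans (ler_wpM2l (ltW q_gt0) ln1D_ge) ineq.
  rewrite mulrA ler_pdivrMr ?addr_gt0 // mulrAC ler_pM2r // => q_le_pi.
  apply: le_trans q_le_pi _; rewrite mulrDr mulr1 lerD2l /d mulrA ler_pdivrMr //.
  by rewrite mulrDr mulr1 mulrC lerDl ltW.
have piq_ge0 y : 0 <= pi y - q y by rewrite subr_ge0.
have piq0 : \sum_y (pi y - q y) = 0 by rewrite sumrB pi1 q1 subrr.
move=> y; apply/eqP; rewrite eq_sym -subr_eq0; apply/eqP.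
exact: (psumr_eq0P (fun y _ => piq_ge0 y) piq0).
Qed.

Definition doob_transform {R : realType} {X : finType} (A : R -> X -> X -> R)
    (h : R -> X -> R) (t : R) (x y : X) : R :=
  if x == y then - \sum_(z | z != x) A t x z * (h t z / h t x)
  else A t x y * (h t y / h t x).

Lemma doob_transform_offdiag {R : realType} {X : finType} A h (t : R) (x y : X) :
  x != y -> doob_transform A h t x y = A t x y * (h t y / h t x).
Proof. by rewrite /doob_transform => /negbTE ->. Qed.

Section DoobTransform.
Context {R : realType} {X : finType}.
Context {T : R} {A : R -> X -> X -> R} {h : R -> X -> R}.
Hypotheses (T_gt0 : 0 < T) (gA : is_generator T A) (bw : kolmogorov_backward T A h)
  (h_gt0 : forall t x, 0 <= t <= T -> 0 < h t x).

Let hV_continuous x : {within `[0, T], continuous (fun t => (h t x)^-1)}.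
Proof.
apply: within_continuousV; last by case: bw.
by move=> t; rewrite /= in_itv => tT; rewrite gt_eqF ?h_gt0.
Qed.

Lemma doob_transform_generator : is_generator T (doob_transform A h).
Proof.
have [A0 _ Ac] := gA; have [hc _] := bw.
have ratio_cont x y : {within `[0, T], continuous (fun t => A t x y * (h t y / h t x))}.
  by do 2!apply: within_continuousM => //.
split => [t x y xy tT|t x tT|x y].
  by rewrite doob_transform_offdiag // mulr_ge0 ?A0 // divr_ge0 // ltW // h_gt0.
- rewrite {1}/doob_transform eqxx; congr (- _); apply: eq_bigr => y yx.
  by rewrite doob_transform_offdiag // eq_sym.
- rewrite /doob_transform; case: eqP => _; last exact: ratio_cont.
  by apply/within_continuousN/within_continuous_sum.
Qed.

Lemma doob_transform_forward {x0 p} : kolmogorov_forward T A x0 p ->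
  kolmogorov_forward T (doob_transform A h) x0 (fun t x => p t x * h t x / h 0 x0).
Proof.
have [hc hd] := bw; move=> [p0 pc pd].
have h00 : 0 < h 0 x0 by rewrite h_gt0 // lexx ltW.
split => [x|x|x t tT].
- by rewrite p0; case: eqP => [->|_]; rewrite ?mul1r ?divff ?gt_eqF // !mul0r.
- by apply: within_continuousM; [exact: within_continuousM|exact: within_continuous_cst].
have tT' : 0 <= t <= T by case/andP: tT => ? ?; rewrite !ltW.
apply: is_derive_eq.
  exact: is_derive1_mul (is_derive1_mul (pd x t tT) (hd x t tT)) (is_derive_cst (h 0 x0)^-1 t 1).
rewrite /cst mulr0 addr0 mulrBl !mulr_suml -sumrB mulrN mulr_sumr -sumrN -big_split /=.
rewrite mulr_suml -sumrB; apply: eq_bigr => y yx.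
have xy : x != y by rewrite eq_sym.
rewrite !doob_transform_offdiag //.
by field; rewrite !gt_eqF ?h00 ?h_gt0.
Qed.

End DoobTransform.

Definition tilted_mass {R : realType} {X : finType} (T alpha : R) (r : X -> R)
    (ppre : R -> X -> R) (psi : X -> R) : R :=
  \sum_y ppre T y * expR (r y / alpha + psi y).

Section Optimality.
Context {R : realType} {X : finType}.
Notation mu := (@lebesgue_measure R).
Context {T alpha : R} {r : X -> R} {Qpre : R -> X -> X -> R} {x0 : X} {ppre : R -> X -> R}.
Hypotheses (T_gt0 : 0 < T) (alpha_gt0 : 0 < alpha) (gpre : is_generator T Qpre)
  (kfpre : kolmogorov_forward T Qpre x0 ppre).

Local Notation tilted_mass := (tilted_mass T alpha r ppre).

Lemma tilted_backward_exists psi : exists h,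
  [/\ kolmogorov_backward T Qpre h, forall x, h T x = expR (r x / alpha + psi x),
      forall t x, 0 <= t <= T -> 0 < h t x & h 0 x0 = tilted_mass psi].
Proof.
have [h [bw hT _ h_gt0]] := kolmogorov_backward_exists
  (fun y => expR (r y / alpha + psi y)) T_gt0 gpre (fun y => expR_ge0 _).
exists h; split => // [t x tT|]; first exact: h_gt0 tT (expR_gt0 _).
rewrite -(kolmogorov_duality kfpre T h) ?T_gt0 ?lexx //.
by apply: eq_bigr => y _; rewrite hT.
Qed.

Lemma log_potential_tilted {Q p h psi} : kolmogorov_forward T Q x0 p ->
  (forall x, h T x = expR (r x / alpha + psi x)) -> h 0 x0 = tilted_mass psi ->
  log_potential p h T - log_potential p h 0 =
    \sum_y p T y * (r y / alpha + psi y) - ln (tilted_mass psi).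
Proof.
move=> [p0 _ _] hT h0; rewrite /log_potential.
under eq_bigr do rewrite hT expRK.
by under [in X in _ - X]eq_bigr do rewrite p0; rewrite sum_dirac h0.
Qed.

Lemma cost_ge_tilted {Q p} psi : is_generator T Q -> kolmogorov_forward T Q x0 p ->
  ((\sum_y p T y * (r y / alpha + psi y) - ln (tilted_mass psi))%:E <=
    \int[mu]_(t in `[0%R, T]) running_cost Qpre Q p t)%E.
Proof.
move=> gQ kf; have [h [bw hT h_gt0 h0]] := tilted_backward_exists psi.
rewrite -(log_potential_tilted kf hT h0).
exact: log_potential_le_cost T_gt0 gpre gQ kf bw h_gt0.
Qed.

Lemma doob_transform_objective : exists Q p,
  [/\ is_generator T Q, kolmogorov_forward T Q x0 p &
       objective T alpha r Qpre Q p = (alpha * ln (tilted_mass (fun _ => 0)))%:E].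
Proof.
have [h [bw hT h_gt0 h0]] := tilted_backward_exists (fun _ => 0).
have gQ := doob_transform_generator gpre bw h_gt0.
have kf := doob_transform_forward T_gt0 bw h_gt0 kfpre.
exists (doob_transform Qpre h), (fun t x => ppre t x * h t x / h 0 x0); split => //.
rewrite /objective (log_potential_eq_cost T_gt0 gpre gQ kf bw h_gt0); last first.
  by move=> t x y _ xy; rewrite doob_transform_offdiag.
rewrite (log_potential_tilted kf hT h0) -EFinM -EFinB; congr EFin.
have -> : \sum_y (ppre T y * h T y / h 0 x0) * (r y / alpha + 0) =
    (\sum_y ppre T y * h T y / h 0 x0 * r y) / alpha.
  by rewrite mulr_suml; apply: eq_bigr => y _; rewrite addr0 mulrA.
by field; rewrite gt_eqF.
Qed.

Lemma tilted_mass_gt0 psi : 0 < tilted_mass psi.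
Proof.
have TT : 0 <= T <= T by rewrite lexx ltW.
have term_ge0 y : 0 <= ppre T y * expR (r y / alpha + psi y).
  by rewrite mulr_ge0 ?expR_ge0 // (kolmogorov_forward_ge0 gpre kfpre).
rewrite lt_def sumr_ge0 // andbT; apply/eqP => Z0.
have := kolmogorov_forward_mass kfpre TT; rewrite big1 => [/esym/eqP|y _].
  by rewrite oner_eq0.
have /eqP := psumr_eq0P (fun y _ => term_ge0 y) Z0 (i := y) isT.
by rewrite mulf_eq0 (gt_eqF (expR_gt0 _)) orbF => /eqP.
Qed.

Lemma optimal_variational_ineq Qstar pstar :
  is_generator T Qstar -> kolmogorov_forward T Qstar x0 pstar ->
  (forall Q p, is_generator T Q -> kolmogorov_forward T Q x0 p ->
    (objective T alpha r Qpre Q p <= objective T alpha r Qpre Qstar pstar)%E) ->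
  forall psi, \sum_y pstar T y * psi y <= ln (tilted_mass psi) - ln (tilted_mass (fun _ => 0)).
Proof.
move=> gstar kfstar opt psi.
have [Q [p [gQ kf objE]]] := doob_transform_objective.
have := opt Q p gQ kf; rewrite objE /objective.
have := cost_ge_tilted psi gstar kfstar.
case: (\int[mu]_(t in `[0%R, T]) running_cost Qpre Qstar pstar t)%E => [j| |].
- rewrite -EFinM -EFinB !lee_fin => lb ub.
  have := ler_wpM2l (ltW alpha_gt0) lb.
  have -> : alpha * (\sum_y pstar T y * (r y / alpha + psi y) - ln (tilted_mass psi)) =
      \sum_y pstar T y * r y + alpha * \sum_y pstar T y * psi y - alpha * ln (tilted_mass psi).
    rewrite mulrBr !mulr_sumr -big_split /=; congr (_ - _); apply: eq_bigr => y _.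
    by field; rewrite gt_eqF.
  by move=> {}lb; rewrite -(ler_pM2l alpha_gt0) mulrBr; lra.
- by move=> _; rewrite muleC gt0_mulye ?lte_fin // leeNy_eq.
- by rewrite leeNy_eq.
Qed.

End Optimality.

Theorem theorem1 (R : realType) (X : finType) (T alpha : R) (r : X -> R)
    (Qpre : R -> X -> X -> R) (x0 : X)
    (Qstar : R -> X -> X -> R) (pstar : R -> X -> R) :
  0 < T -> 0 < alpha ->
  is_generator T Qpre ->
  is_generator T Qstar ->
  kolmogorov_forward T Qstar x0 pstar ->
  (forall (Q : R -> X -> X -> R) (p : R -> X -> R),
      is_generator T Q -> kolmogorov_forward T Q x0 p ->
      (objective T alpha r Qpre Q p <= objective T alpha r Qpre Qstar pstar)%E) ->
  forall ppre : R -> X -> R, kolmogorov_forward T Qpre x0 ppre ->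
  forall x : X,
    pstar T x = expR (r x / alpha) * ppre T x /
                \sum_(y : X) expR (r y / alpha) * ppre T y.
Proof.
move=> T_gt0 alpha_gt0 gpre gstar kfstar opt ppre kfpre.
have Z_gt0 psi : 0 < tilted_mass T alpha r ppre psi := tilted_mass_gt0 T_gt0 gpre kfpre psi.
have -> : \sum_y expR (r y / alpha) * ppre T y = tilted_mass T alpha r ppre (fun _ => 0).
  by apply: eq_bigr => y _; rewrite addr0 mulrC.
apply: gibbs_variational_eq => [y|||psi].
- by rewrite divr_ge0 ?mulr_ge0 ?expR_ge0 ?(kolmogorov_forward_ge0 gpre kfpre) ?lexx ?ltW.
- rewrite -mulr_suml -[RHS](mulfV (lt0r_neq0 (Z_gt0 (fun _ => 0)))).
  by congr (_ / _); apply: eq_bigr => y _; rewrite addr0 mulrC.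
- by rewrite (kolmogorov_forward_mass kfstar) // lexx ltW.
- have -> : \sum_y expR (r y / alpha) * ppre T y / tilted_mass T alpha r ppre (fun _ => 0) *
      expR (psi y) = tilted_mass T alpha r ppre psi / tilted_mass T alpha r ppre (fun _ => 0).
    by rewrite /tilted_mass mulr_suml; apply: eq_bigr => y _; rewrite expRD; ring.
  rewrite lnM ?posrE ?invr_gt0 // lnV ?posrE //.
  exact: (optimal_variational_ineq T_gt0 alpha_gt0 gpre kfpre _ _ gstar kfstar opt).
Qed.
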